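(* Let $m\ge 1$ and let $s_1,\dots,s_{2m}$ be positive integers. Put $S=\sum_{i=1}^{2m}s_i$, $s_{\max}=\max_i s_i$, $M=S+1$, $d_i=s_{\max}-s_i$, and $\epsilon=\frac{1}{2M}$. Let $$P_R=\Big\{x\in\mathbb{R}^{2m}:\ 0\le x_i\le 1\ \forall i,\ \sum_{i=1}^{2m}(M+s_i)x_i\le \tfrac12 S+mM+\epsilon,\ \sum_{i=1}^{2m}(M+d_i)x_i\le \tfrac12\sum_{i=1}^{2m}d_i+mM+\epsilon\Big\}.$$ Let $v$ be a vertex of $P_R$ having exactly $2m-1$ coordinates in $\{0,1\}$ (i.e. lying on exactly $2m-1$ of the box constraints $0\le x_i\le 1$), and suppose $|\{i: v_i=1\}|=m-1$. Then $v$ is not degenerate, i.e. at most $2m$ of the $4m+2$ defining inequalities of $P_R$ are active at $v$ (equivalently, the two knapsack inequalities are not both active at $v$).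
   Context: The inequalities $0\le x_i\le1$ are the box constraints; the other two inequalities are the knapsack constraints. A vertex of $P_R$ is degenerate if more than $2m$ of the defining inequalities are active at it. *)

From HB Require Import structures.
From mathcomp Require Import all_boot all_order all_algebra.
Set Implicit Arguments. Unset Strict Implicit. Unset Printing Implicit Defensive.
Import Order.TTheory GRing.Theory Num.Theory.
Local Open Scope ring_scope.

Section PR.
Variables (R : realFieldType) (m : nat) (s : 'I_(2 * m) -> nat).

Definition sumS : nat := (\sum_(i < 2 * m) s i)%N.
Definition smax : nat := (\max_(i < 2 * m) s i)%N.
Definition bigM : R := (sumS + 1)%:R.
Definition dd (i : 'I_(2 * m)) : nat := (smax - s i)%N.
Definition eps : R := 1 / (2 * bigM).

Definition knap1_lhs (x : 'rV[R]_(2 * m)) : R :=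
  \sum_(i < 2 * m) (bigM + (s i)%:R) * x ord0 i.
Definition knap1_rhs : R := sumS%:R / 2 + m%:R * bigM + eps.
Definition knap2_lhs (x : 'rV[R]_(2 * m)) : R :=
  \sum_(i < 2 * m) (bigM + (dd i)%:R) * x ord0 i.
Definition knap2_rhs : R :=
  (\sum_(i < 2 * m) dd i)%N%:R / 2 + m%:R * bigM + eps.

Definition inPR (x : 'rV[R]_(2 * m)) : Prop :=
  (forall i, 0 <= x ord0 i <= 1) /\
  knap1_lhs x <= knap1_rhs /\ knap2_lhs x <= knap2_rhs.

Definition is_vertex (v : 'rV[R]_(2 * m)) : Prop :=
  inPR v /\
  forall (x y : 'rV[R]_(2 * m)) (t : R), inPR x -> inPR y ->
    0 < t < 1 -> v = t *: x + (1 - t) *: y -> x = v /\ y = v.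

Definition num_active (x : 'rV[R]_(2 * m)) : nat := (
  #|[set i : 'I_(2 * m) | x ord0 i == 0%R]| + #|[set i : 'I_(2 * m) | x ord0 i == 1%R]|
   + (knap1_lhs x == knap1_rhs) + (knap2_lhs x == knap2_rhs))%N.

End PR.

From HB Require Import structures.
From mathcomp Require Import all_boot all_order all_algebra.
From mathcomp Require Import zify ring.
Import Order.TTheory GRing.Theory Num.Theory.
Local Open Scope ring_scope.

(* If both knapsack constraints were tight at v, let j be the fractional
   coordinate, t = v_j and O the set of ones.  Multiplying each tight
   constraint by 2M gives  M A + 1 = 2M (M + a) t + 2M p  with integers
   A, p and a = s_j resp. a = d_j.  Eliminating t and reducing modulo M forces
   s_j = d_j, hence s_max = 2 s_j, and then comparing the two equations gives
   S = 2 s_j + 2 sum_{i in O} s_i.  But t < 1 in the first equation gives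
   S < 2 s_j + 2 sum_{i in O} s_i.  The choice eps = 1/(2M) is what makes
   the scaled constraints integral apart from the t-term. *)

Lemma setC1_of_card (T : finType) (A : {set T}) :
  #|A|.+1 = #|T| -> exists j, A = [set~ j].
Proof.
move=> cardA; have /cards1P [j Aj] : #|~: A| == 1%N.
  by rewrite -(eqn_add2l #|A|) cardsC -cardA addn1.
by exists j; rewrite -Aj setCK.
Qed.

Lemma exists_fractional_coordinate (R : nzRingType) (T : finType) (c : T -> R) :
  #|[set i | (c i == 0) || (c i == 1)]|.+1 = #|T| ->
  exists2 j, c j != 1 & forall i, i != j -> (c i == 0) || (c i == 1).
Proof.
case/setC1_of_card => j Aj; exists j => [|i ij].
  by move/negbT: (setC11 j); rewrite -Aj inE => /norP [].
by move: ij; rewrite -in_setC1 -Aj inE.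
Qed.

Lemma eq_of_cross_residue (M a b A B X Y : nat) : (a < M)%N -> (b < M)%N ->
  ((M + b) * (M * A + 1) + M * X = (M + a) * (M * B + 1) + M * Y)%N -> a = b.
Proof.
move=> aM bM /(congr1 (modn^~ M)).
have residue c C Z : ((M + c) * (M * C + 1) + M * Z = ((M + c) * C + 1 + Z) * M + c)%N.
  by ring.
by rewrite /= !residue !modnMDl !modn_small.
Qed.

Section TightScaledConstraints.
Context {R : numDomainType} {M : nat} {t : R}.

Definition scaled_tight (a A p : nat) :=
  (M * A + 1)%:R = (2 * M * (M + a))%:R * t + (2 * M * p)%:R.

Lemma scaled_tight_pair {a b A B p q : nat} : (a < M)%N -> (b < M)%N ->
  scaled_tight a A p -> scaled_tight b B q ->
  a = b /\ (A + 2 * q = B + 2 * p)%N.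
Proof.
move=> aM bM eA eB.
have ab : a = b.
  apply: (@eq_of_cross_residue M a b A B (2 * (M + a) * q) (2 * (M + b) * p)) => //.
  apply/eqP; rewrite -(eqr_nat R) !(natrD, natrM); apply/eqP.
  by move: eA eB; rewrite /scaled_tight !(natrD, natrM) => -> ->; ring.
split=> //; subst b.
have : (M * A + 1 + 2 * M * q)%:R = (M * B + 1 + 2 * M * p)%:R :> R.
  by rewrite natrD eA natrD eB; ring.
move/eqP; rewrite eqr_nat => /eqP e.
have M_gt0 : (0 < M)%N by apply: leq_ltn_trans aM.
by apply/eqP; rewrite -(eqn_pmul2l M_gt0); apply/eqP; nia.
Qed.

Lemma scaled_tight_lt1 {a A p : nat} : (0 < M)%N -> t < 1 ->
  scaled_tight a A p -> (A < 2 * (M + a) + 2 * p)%N.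
Proof.
move=> M_gt0 t_lt1 e; rewrite -(ltn_pmul2l M_gt0) -(ltr_nat R).
have -> : (M * (2 * (M + a) + 2 * p) = 2 * M * (M + a) + 2 * M * p)%N by ring.
apply: (@lt_le_trans _ _ (M * A + 1)%:R); first by rewrite ltr_nat addn1.
rewrite e natrD lerD2r -[leRHS]mulr1 ler_pM2l ?ltW // ltr0n.
by rewrite !muln_gt0 M_gt0 addn_gt0 M_gt0.
Qed.

End TightScaledConstraints.

Section OneFractionalCoordinate.
Context {R : numFieldType} {T : finType} {c : T -> R} {j : T}.
Hypotheses (c01 : forall i, i != j -> (c i == 0) || (c i == 1)) (cj1 : c j != 1).
Let O := [set i | c i == 1].

Lemma sum_mul_one_fractional (w : T -> R) :
  \sum_i w i * c i = w j * c j + \sum_(i in O) w i.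
Proof.
rewrite (bigD1 j) //=; congr (_ + _).
rewrite big_mkcond [RHS]big_mkcond; apply: eq_bigr => i _ /=.
rewrite inE; case: (eqVneq i j) => [->|ij] /=; first by rewrite (negbTE cj1).
by case/orP: (c01 _ ij) => /eqP ->; rewrite ?mulr0 ?mulr1 ?eqxx // eq_sym oner_eq0.
Qed.

Lemma tight_knapsack_scaled (M W : nat) (w : T -> nat) : (0 < M)%N ->
  \sum_i (M%:R + (w i)%:R) * c i
    = W%:R / 2 + (#|O|.+1)%:R * M%:R + 1 / (2 * M%:R) ->
  scaled_tight (M := M) (t := c j) (w j) (W + 2 * M) (\sum_(i in O) w i).
Proof.
rewrite /scaled_tight => M_gt0; rewrite sum_mul_one_fractional big_split sumr_const -natr_sum /=.
set u := _ * c j => tight.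
rewrite [(2 * M * _)%:R]natrM [(M + _)%:R]natrD -mulrA -/u.
have -> : u = W%:R / 2 + M%:R + 1 / (2 * M%:R) - (\sum_(i in O) w i)%:R.
  by rewrite -[u](addrK (M%:R *+ #|O| + (\sum_(i in O) w i)%:R)) tight; ring.
by field; rewrite pnatr_eq0 -lt0n.
Qed.

End OneFractionalCoordinate.

Section Weights.
Context {m : nat} (s : 'I_(2 * m) -> nat).

Lemma smax_le_sumS : (smax s <= sumS s)%N.
Proof. by apply/bigmax_leqP => i _; rewrite /sumS (bigD1 i) //= leq_addr. Qed.

Lemma s_lt_sumS1 i : (s i < sumS s + 1)%N.
Proof. by rewrite addn1 ltnS (leq_trans (leq_bigmax i)) ?smax_le_sumS. Qed.

Lemma dd_lt_sumS1 i : (dd s i < sumS s + 1)%N.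
Proof. by rewrite addn1 ltnS (leq_trans (leq_subr _ _)) ?smax_le_sumS. Qed.

Lemma dd_add_s i : (dd s i + s i = smax s)%N.
Proof. exact/subnK/leq_bigmax. Qed.

Lemma sum_dd_add_s (P : pred 'I_(2 * m)) :
  (\sum_(i | P i) dd s i + \sum_(i | P i) s i = #|P| * smax s)%N.
Proof. by rewrite -big_split -sum_nat_const; apply: eq_big => // i _; exact: dd_add_s. Qed.

End Weights.

Lemma num_activeE (R : realFieldType) (m : nat) (s : 'I_(2 * m) -> nat)
    (v : 'rV[R]_(2 * m)) :
  num_active s v = (#|[set i | (v ord0 i == 0%R) || (v ord0 i == 1%R)]|
    + (knap1_lhs s v == knap1_rhs R s) + (knap2_lhs s v == knap2_rhs R s))%N.
Proof.
rewrite /num_active -cardsUI (_ : _ :&: _ = set0) ?cards0 ?addn0.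
  by congr (_ + _ + _); apply: eq_card => i; rewrite !inE.
by apply/setP => i; rewrite !inE; case: eqP => // ->; rewrite eq_sym oner_eq0.
Qed.

Theorem lemma2 (R : realFieldType) (m : nat) (s : 'I_(2 * m) -> nat)
  (v : 'rV[R]_(2 * m)) :
  (1 <= m)%N ->
  (forall i, (0 < s i)%N) ->
  is_vertex s v ->
  #|[set i : 'I_(2 * m) | (v ord0 i == 0) || (v ord0 i == 1)]| = (2 * m - 1)%N ->
  #|[set i : 'I_(2 * m) | v ord0 i == 1]| = (m - 1)%N ->
  (num_active s v <= 2 * m)%N.
Proof.
move=> m_gt0 _ [[box _] _] card01 card1.
set c := v ord0 in box card01 card1 *.
set O := [set i | c i == 1] in card1 *.
have [j cj1 c01] : exists2 j, c j != 1 & forall i, i != j -> (c i == 0) || (c i == 1).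
  by apply: exists_fractional_coordinate; rewrite card01 card_ord; lia.
have cj_lt1 : c j < 1 by rewrite lt_neqAle cj1; case/andP: (box j).
have mO : m = #|O|.+1 by rewrite card1; lia.
rewrite num_activeE -/c card01.
suff : ~~ ((knap1_lhs s v == knap1_rhs R s) && (knap2_lhs s v == knap2_rhs R s)).
  by case: (knap1_lhs s v == _); case: (knap2_lhs s v == _) => //= _; lia.
apply/andP => -[/eqP tight1 /eqP tight2].
set M := (sumS s + 1)%N.
have M_gt0 : (0 < M)%N by rewrite /M addn1.
have e1 := tight_knapsack_scaled c01 cj1 M (sumS s) s M_gt0.
rewrite -mO in e1; have {}e1 := e1 tight1.
have e2 := tight_knapsack_scaled c01 cj1 M (\sum_i dd s i)%N (dd s) M_gt0.
rewrite -mO in e2; have {}e2 := e2 tight2.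
have [sj_dj coef] := scaled_tight_pair (s_lt_sumS1 s j) (dd_lt_sumS1 s j) e1 e2.
have bound := scaled_tight_lt1 M_gt0 cj_lt1 e1.
have whole := sum_dd_add_s s xpredT; rewrite card_ord in whole.
have onO : (\sum_(i in O) dd s i + \sum_(i in O) s i = #|O| * smax s)%N :=
  sum_dd_add_s s [in O].
rewrite -/O in coef bound; rewrite -/(sumS s) in whole.
have := dd_add_s s j; rewrite -sj_dj.
nia.
Qed.
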